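(* Let $E>0$ and $0<\delta_0<1$. There exists an integer $\ell_0=\ell_0(E,\delta_0)$ such that for every $v\in\mathcal{X}^1$ with $E(v)\le E$, either $\big|1-|v(x)|\big|<\delta_0$ for all $x\in\mathbb{R}$, or there exist $\ell\le\ell_0$ points $x_1,\dots,x_\ell$ such that $\big|1-|v(x_i)|\big|\ge\delta_0$ for all $1\le i\le\ell$ and $\big|1-|v(x)|\big|\le\delta_0$ for all $x\in\mathbb{R}\setminus\bigcup_{i=1}^\ell[x_i-1,x_i+1]$.
   Context: $\mathcal{X}^1=\{w\in L^\infty(\mathbb{R};\mathbb{C}):\ w'\in L^2,\ 1-|w|^2\in L^2\}$. $E(v)=\frac12\int_\mathbb{R}|v'|^2+\frac14\int_\mathbb{R}(1-|v|^2)^2$. *)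

(* R : realType. A complex-valued function v : R -> C
   is represented by its real and imaginary parts (v1, v2). *)
From HB Require Import structures.
From mathcomp Require Import all_boot all_order all_algebra.
From mathcomp Require Import all_classical all_reals all_analysis.
Set Implicit Arguments. Unset Strict Implicit. Unset Printing Implicit Defensive.
Import Order.TTheory GRing.Theory Num.Theory.
Import numFieldNormedType.Exports.
Local Open Scope classical_set_scope.
Local Open Scope ring_scope.

Section Defs.
Variable R : realType.
Local Notation leb := (@lebesgue_measure R).

Definition cmod (v1 v2 : R -> R) (x : R) : R := Num.sqrt (v1 x ^+ 2 + v2 x ^+ 2).

Definition L2 (f : R -> R) : Prop :=
  measurable_fun setT f /\ (\int[leb]_x ((f x ^+ 2)%:E) < +oo)%E.

(* f is essentially bounded (for the continuous functions used here: bounded) *)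
Definition Linfty (f : R -> R) : Prop := exists M : R, forall x, `|f x| <= M.

(* g is the (weak) derivative of v: v is the primitive of the locally
   integrable g, i.e. v(y) - v(x) = int_x^y g  (H^1_loc, continuous representative) *)
Definition is_weak_deriv (v g : R -> R) : Prop :=
  measurable_fun setT g /\
  forall x y : R, x <= y ->
    leb.-integrable `[x, y] (EFin \o g) /\
    v y - v x = Rintegral leb `[x, y] g.

Definition in_X1 (v1 v2 g1 g2 : R -> R) : Prop :=
  Linfty v1 /\ Linfty v2 /\
  is_weak_deriv v1 g1 /\ is_weak_deriv v2 g2 /\
  L2 g1 /\ L2 g2 /\
  L2 (fun x => 1 - cmod v1 v2 x ^+ 2).

Definition energy (v1 v2 g1 g2 : R -> R) : \bar R :=
  ((2^-1)%:E * \int[leb]_x ((g1 x ^+ 2 + g2 x ^+ 2)%:E)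
   + (4^-1)%:E * \int[leb]_x (((1 - cmod v1 v2 x ^+ 2) ^+ 2)%:E))%E.

End Defs.

(* A point where ||v| - 1| >= delta0 costs energy at least delta0^2/128 on the
   half-unit window to its right: either |v| moves by delta0/2 inside the window,
   and the kinetic term pays for it through |v'| <= 4|v'|^2/delta0 + delta0/16,
   or |v| stays delta0/2 away from 1 on the whole window, and the potential term
   pays.  Points that are 1-apart have disjoint windows, so a 1-separated family
   of such points has at most 128 E / delta0^2 members; a maximal one is the
   required family x_1, ..., x_l, since every bad point lies within 1 of it. *)
From HB Require Import structures.
From mathcomp Require Import all_boot all_order all_algebra.
From mathcomp Require Import all_classical all_reals all_analysis.
From mathcomp Require Import lra ring.
Import Order.TTheory GRing.Theory Num.Theory.
Import numFieldNormedType.Exports.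
Local Open Scope classical_set_scope.
Local Open Scope ring_scope.
Set Implicit Arguments. Unset Strict Implicit. Unset Printing Implicit Defensive.
Lemma pairwise_sym_in (T : eqType) (r : rel T) (s : seq T) :
  symmetric r -> pairwise r s -> {in s &, forall a b, a != b -> r a b}.
Proof.
move=> r_sym; elim: s => //= x s IHs /andP[/allP rxs prs] a b.
rewrite !inE => /predU1P[-> | sa] /predU1P[-> | sb]; rewrite ?eqxx //.
- by move=> _; exact: rxs.
- by move=> _; rewrite r_sym; exact: rxs.
- exact: IHs.
Qed.

Lemma exists_maximal_pairwise (T : Type) (r : rel T) (P : pred T) (n : nat) :
  (forall s, pairwise r s -> all P s -> (size s <= n)%N) ->
  exists s, [/\ pairwise r s, all P s & forall x, P x -> ~~ all (r x) s].
Proof.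
move=> bounded; apply: contrapT => no_max.
have extend s : pairwise r s -> all P s -> exists x, P x && all (r x) s.
  move=> rs Ps; apply: contrapT => no_ext; apply: no_max; exists s; split=> // x Px.
  by apply/negP => rxs; apply: no_ext; exists x; rewrite Px.
have grow k : exists s, [/\ pairwise r s, all P s & size s = k].
  elim: k => [|k [s [rs Ps <-]]]; first by exists [::].
  have [x /andP[Px rxs]] := extend s rs Ps.
  by exists (x :: s); rewrite /= rxs rs Px Ps.
have [s [rs Ps sz]] := grow n.+1.
by have := bounded s rs Ps; rewrite sz ltnn.
Qed.

Lemma sqrt_sum_sqr_dist_le (R : rcfType) (a b c d : R) :
  `|Num.sqrt (a ^+ 2 + b ^+ 2) - Num.sqrt (c ^+ 2 + d ^+ 2)| <= `|a - c| + `|b - d|.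
Proof.
suff le_add : forall a' b' c' d' : R, Num.sqrt (a' ^+ 2 + b' ^+ 2) <=
    Num.sqrt (c' ^+ 2 + d' ^+ 2) + (`|a' - c'| + `|b' - d'|).
  rewrite ler_norml; have := le_add a b c d; have := le_add c d a b.
  rewrite (distrC c a) (distrC d b); lra.
move=> a' b' c' d'.
set Q := Num.sqrt (c' ^+ 2 + d' ^+ 2); set u := `|a' - c'|; set w := `|b' - d'|.
have QQ : Q ^+ 2 = `|c'| ^+ 2 + `|d'| ^+ 2.
  by rewrite !real_normK ?num_real // sqr_sqrtr // addr_ge0 ?sqr_ge0.
have le_c : `|c'| <= Q.
  by rewrite -(sqrtr_sqr c') ler_sqrt ?addr_ge0 ?sqr_ge0 // lerDl sqr_ge0.
have le_d : `|d'| <= Q.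
  by rewrite -(sqrtr_sqr d') ler_sqrt ?addr_ge0 ?sqr_ge0 // lerDr sqr_ge0.
have le_a : `|a'| <= `|c'| + u by rewrite /u -{1}(subrK c' a') addrC ler_normD.
have le_b : `|b'| <= `|d'| + w by rewrite /w -{1}(subrK d' b') addrC ler_normD.
have u0 : 0 <= u := normr_ge0 _. have w0 : 0 <= w := normr_ge0 _.
have Qu : 0 <= Q + (u + w) by rewrite addr_ge0 ?sqrtr_ge0 ?addr_ge0.
rewrite -[X in _ <= X]ger0_norm // -sqrtr_sqr ler_sqrt ?sqr_ge0 //.
rewrite -(real_normK (num_real a')) -(real_normK (num_real b')).
have ea : `|a'| ^+ 2 <= (`|c'| + u) ^+ 2 by rewrite !expr2 ler_pM.
have eb : `|b'| ^+ 2 <= (`|d'| + w) ^+ 2 by rewrite !expr2 ler_pM.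
have := normr_ge0 c'; have := normr_ge0 d'; nra.
Qed.

Lemma sqr_le_sqr_one_subX (R : realDomainType) (e c : R) :
  0 <= c -> 0 <= e -> e <= `|1 - c| -> e ^+ 2 <= (1 - c ^+ 2) ^+ 2.
Proof.
move=> c0 e0 le_e; have -> : 1 - c ^+ 2 = (1 - c) * (1 + c) by ring.
rewrite exprMn -(real_normK (num_real (1 - c))).
apply: le_trans (_ : `|1 - c| ^+ 2 <= _); first by rewrite lerXn2r ?nnegrE.
by rewrite ler_peMr ?sqr_ge0 // exprn_ege1 // lerDl.
Qed.

Lemma lebesgue_measure_itvcc (R : realType) (x y : R) : x <= y ->
  (@lebesgue_measure R) [set` `[x, y]] = (y - x)%:E.
Proof.
move=> le_xy; rewrite lebesgue_measure_itv /= lte_fin.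
case: ltP => [_|le_yx]; first by rewrite EFinN.
have -> : y = x by apply/eqP; rewrite eq_le le_yx le_xy.
by rewrite subrr.
Qed.

Lemma weak_deriv_increment_le (R : realType) (v g : R -> R) (x y : R) :
  is_weak_deriv v g -> x <= y ->
  (`|v y - v x|%:E <= \int[@lebesgue_measure R]_(t in `[x, y]) `|g t|%:E)%E.
Proof.
move=> [mg primitive] le_xy; have [ig ->] := primitive x y le_xy.
rewrite EFin_normr_Rintegral //; apply: le_trans (le_abse_integral _ _ _) _ => //.
by apply/measurable_realfun.measurable_EFinP; apply: measurable_funS mg.
Qed.

Section EnergyDensity.
Variable R : realType.
Local Notation leb := (@lebesgue_measure R).
Variables v1 v2 g1 g2 : R -> R.
Hypothesis v_X1 : in_X1 v1 v2 g1 g2.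

Definition energy_density (x : R) : R :=
  2^-1 * (g1 x ^+ 2 + g2 x ^+ 2) + 4^-1 * (1 - cmod v1 v2 x ^+ 2) ^+ 2.

Lemma energy_density_ge0 x : 0 <= energy_density x.
Proof. by rewrite addr_ge0 // mulr_ge0 ?addr_ge0 ?sqr_ge0 ?invr_ge0. Qed.

Lemma measurable_gradient_density :
  measurable_fun setT (fun x => g1 x ^+ 2 + g2 x ^+ 2).
Proof.
case: v_X1 => _ [_ [[mg1 _] [[mg2 _] _]]].
by apply: measurable_realfun.measurable_funD; apply: measurable_realfun.measurable_funX.
Qed.

Lemma measurable_potential_density :
  measurable_fun setT (fun x => (1 - cmod v1 v2 x ^+ 2) ^+ 2).
Proof.
case: v_X1 => _ [_ [_ [_ [_ [_ [mF _]]]]]].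
exact: measurable_realfun.measurable_funX.
Qed.

Lemma measurable_energy_density : measurable_fun setT energy_density.
Proof.
apply: measurable_realfun.measurable_funD; apply: measurable_realfun.measurable_funM => //.
  exact: measurable_gradient_density.
exact: measurable_potential_density.
Qed.

Lemma energy_eq_integral_density :
  energy v1 v2 g1 g2 = (\int[leb]_x (energy_density x)%:E)%E.
Proof.
have gdE := (measurable_realfun.measurable_EFinP _ _).2 measurable_gradient_density.
have pdE := (measurable_realfun.measurable_EFinP _ _).2 measurable_potential_density.
rewrite /energy /energy_density; apply/esym.
under eq_integral do rewrite EFinD EFinM [X in (_ + X)%E]EFinM.
rewrite ge0_integralD //.
- rewrite !ge0_integralZl_EFin // => x _; rewrite lee_fin ?sqr_ge0 //.
  by rewrite addr_ge0 ?sqr_ge0.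
- by move=> x _; rewrite -EFinM lee_fin mulr_ge0 ?invr_ge0 ?addr_ge0 ?sqr_ge0.
- exact: emeasurable_funM.
- by move=> x _; rewrite -EFinM lee_fin mulr_ge0 ?invr_ge0 ?sqr_ge0.
- exact: emeasurable_funM.
Qed.


Lemma cmod_increment_le x y : x <= y ->
  (`|cmod v1 v2 y - cmod v1 v2 x|%:E
   <= \int[leb]_(t in `[x, y]) (`|g1 t| + `|g2 t|)%:E)%E.
Proof.
case: v_X1 => _ [_ [dv1 [dv2 _]]] le_xy.
have [[mg1 _] [mg2 _]] := (dv1, dv2).
under eq_integral do rewrite EFinD.
rewrite ge0_integralD //; first last.
- apply/measurable_realfun.measurable_EFinP.
  by apply: measurableT_comp => //; apply: measurable_funS mg2.
- apply/measurable_realfun.measurable_EFinP.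
  by apply: measurableT_comp => //; apply: measurable_funS mg1.
have := leeD (weak_deriv_increment_le dv1 le_xy) (weak_deriv_increment_le dv2 le_xy).
apply: le_trans.
by rewrite -EFinD lee_fin sqrt_sum_sqr_dist_le.
Qed.

(* AM-GM: [|a| <= 4 a^2 / d + d / 16] for each of [a = g1 t] and [a = g2 t]. *)
Lemma abs_deriv_le_energy_density (d t : R) : 0 < d ->
  `|g1 t| + `|g2 t| <= 8 / d * energy_density t + d / 8.
Proof.
move=> d_gt0; rewrite -(ler_pM2l d_gt0).
have -> : d * (8 / d * energy_density t + d / 8) = 4 * (g1 t ^+ 2 + g2 t ^+ 2)
    + 2 * (1 - cmod v1 v2 t ^+ 2) ^+ 2 + d ^+ 2 / 8.
  by rewrite /energy_density; field; rewrite gt_eqF.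
rewrite -(real_normK (num_real (g1 t))) -(real_normK (num_real (g2 t))).
have := sqr_ge0 (2 * `|g1 t| - d / 4); have := sqr_ge0 (2 * `|g2 t| - d / 4).
have := normr_ge0 (g1 t); have := normr_ge0 (g2 t).
have := sqr_ge0 (1 - cmod v1 v2 t ^+ 2); nra.
Qed.

Lemma integral_abs_deriv_le (d x y : R) : 0 < d -> x <= y ->
  (\int[leb]_(t in `[x, y]) (`|g1 t| + `|g2 t|)%:E
   <= (8 / d)%:E * \int[leb]_(t in `[x, y]) (energy_density t)%:E
      + (d / 8 * (y - x))%:E)%E.
Proof.
move=> d_gt0 le_xy.
have k_ge0 : 0 <= 8 / d by rewrite divr_ge0 // ltW.
have c_ge0 : 0 <= d / 8 by rewrite divr_ge0 // ltW.
rewrite (EFinM (d / 8)) -(lebesgue_measure_itvcc le_xy) -integral_cst //.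
rewrite -ge0_integralZl_EFin //; first last.
- apply/measurable_realfun.measurable_EFinP.
  exact: measurable_funS measurable_energy_density.
- by move=> t _; rewrite lee_fin energy_density_ge0.
rewrite -ge0_integralD //; first last.
- apply: emeasurable_funM => //; apply/measurable_realfun.measurable_EFinP.
  exact: measurable_funS measurable_energy_density.
- by move=> t _; rewrite -EFinM lee_fin mulr_ge0 ?energy_density_ge0.
apply: ge0_le_integral => //.
- case: v_X1 => _ [_ [[mg1 _] [[mg2 _] _]]].
  apply/measurable_realfun.measurable_EFinP.
  apply: measurable_funS (_ : measurable_fun setT _) => //.
  by apply: measurable_realfun.measurable_funD; apply: measurableT_comp.
- apply: emeasurable_funD; last exact: measurable_cst.
  apply: emeasurable_funM => //; apply/measurable_realfun.measurable_EFinP.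
  exact: measurable_funS measurable_energy_density.
- by move=> t _; rewrite -EFinM -EFinD lee_fin abs_deriv_le_energy_density.
Qed.

Lemma oscillation_energy_lb (d x y : R) : 0 < d -> x <= y -> y <= x + 2^-1 ->
  d / 2 <= `|cmod v1 v2 y - cmod v1 v2 x| ->
  ((7 * d ^+ 2 / 128)%:E
   <= \int[leb]_(t in `[x, (x + 2^-1)%R]) (energy_density t)%:E)%E.
Proof.
move=> d_gt0 le_xy le_yx osc.
set Z := (X in (_ <= X)%E).
have sub : (\int[leb]_(t in `[x, y]) (energy_density t)%:E <= Z)%E.
  apply: ge0_subset_integral => //.
  - apply/measurable_realfun.measurable_EFinP.
    exact: measurable_funS measurable_energy_density.
  - by move=> t _; rewrite lee_fin energy_density_ge0.
  - by apply: subset_itv; rewrite bnd_simp.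
have bound : ((d / 2 - d / 16)%:E <= (8 / d)%:E * Z)%E.
  rewrite EFinB leeBlDr //.
  have := le_trans (cmod_increment_le le_xy) (integral_abs_deriv_le d_gt0 le_xy).
  move=> /(le_trans _) osc_int; apply: le_trans (osc_int _ _) _; first by rewrite lee_fin.
  apply: leeD; first by apply: lee_wpmul2l sub; rewrite lee_fin divr_ge0 // ltW.
  by rewrite lee_fin; nra.
rewrite (_ : 7 * d ^+ 2 / 128 = (8 / d)^-1 * (d / 2 - d / 16)); last first.
  by field; rewrite gt_eqF.
by rewrite EFinM lee_pdivrMl // divr_gt0.
Qed.

Lemma far_from_one_energy_lb (d x : R) : 0 <= d ->
  (forall t, x <= t <= x + 2^-1 -> d <= `|1 - cmod v1 v2 t|) ->
  ((d ^+ 2 / 8)%:E <= \int[leb]_(t in `[x, (x + 2^-1)%R]) (energy_density t)%:E)%E.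
Proof.
move=> d_ge0 far.
have le_x : x <= x + 2^-1 by rewrite lerDl.
rewrite (_ : d ^+ 2 / 8 = d ^+ 2 / 4 * (x + 2^-1 - x)); last by rewrite addrC addKr; field.
rewrite EFinM -(lebesgue_measure_itvcc le_x) -integral_cst //.
apply: ge0_le_integral => //.
- by move=> t _; rewrite lee_fin divr_ge0 ?sqr_ge0.
- apply/measurable_realfun.measurable_EFinP.
  exact: measurable_funS measurable_energy_density.
move=> t; rewrite /= in_itv /= lee_fin => /far far_t.
have := sqr_le_sqr_one_subX (sqrtr_ge0 _) d_ge0 far_t.
have := sqr_ge0 (g1 t); have := sqr_ge0 (g2 t); rewrite /energy_density /cmod; lra.
Qed.

Lemma energy_near_point_lb (d x : R) : 0 < d -> d <= `|1 - cmod v1 v2 x| ->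
  ((d ^+ 2 / 128)%:E
   <= \int[leb]_(t in `[x, (x + 2^-1)%R]) (energy_density t)%:E)%E.
Proof.
move=> d_gt0 far_x; have d2_ge0 : 0 <= d ^+ 2 := sqr_ge0 d.
have [[y [/andP[le_xy le_yx] osc]] | steady] := pselect (exists y,
    x <= y <= x + 2^-1 /\ d / 2 <= `|cmod v1 v2 y - cmod v1 v2 x|).
  apply: le_trans (oscillation_energy_lb d_gt0 le_xy le_yx osc).
  by rewrite lee_fin; lra.
have far_itv t : x <= t <= x + 2^-1 -> d / 2 <= `|1 - cmod v1 v2 t|.
  move=> t_itv; have near_t : `|cmod v1 v2 t - cmod v1 v2 x| < d / 2.
    by rewrite ltNge; apply/negP => osc; apply: steady; exists t.
  have := ler_normD (1 - cmod v1 v2 t) (cmod v1 v2 t - cmod v1 v2 x).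
  by rewrite subrKA; lra.
apply: le_trans (far_from_one_energy_lb _ far_itv); last by rewrite divr_ge0 ?ltW.
by rewrite lee_fin; lra.
Qed.

Lemma separated_energy_lb (d : R) (s : seq R) : 0 < d ->
  pairwise (fun a b => 1 < `|a - b|) s ->
  all (fun a => d <= `|1 - cmod v1 v2 a|) s ->
  (((size s)%:R * (d ^+ 2 / 128))%:E
   <= \int[leb]_x (energy_density x)%:E)%E.
Proof.
move=> d_gt0 sep_s /allP far_s.
have uniq_s : uniq s by apply: pairwise_uniq sep_s => a; rewrite subrr normr0 ltr10.
have sep_in : {in s &, forall a b, a != b -> 1 < `|a - b|}.
  by apply: pairwise_sym_in sep_s => a b; rewrite distrC.
pose F a := [set` `[a, a + 2^-1]] : set R.
have mF a : measurable (F a) by exact: measurable_itv.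
have trivF : trivIset [set` s] F.
  apply/trivIsetP => a b /= sa sb neq_ab; apply/seteqP; split => // t [].
  rewrite /F /= !in_itv /= => /andP[le_at le_ta] /andP[le_bt le_tb].
  by have := sep_in a b sa sb neq_ab; rewrite ltNge ler_norml; lra.
rewrite (_ : _ * _ = \sum_(a <- s) (d ^+ 2 / 128)) -?sumEFin; last first.
  by rewrite big_const_seq count_predT iter_addr_0 mulr_natl.
apply: (@le_trans _ _ (\sum_(a <- s) \int[leb]_(x in F a) (energy_density x)%:E)%E).
  by rewrite !big_seq; apply: lee_sum => a /far_s; exact: energy_near_point_lb.
rewrite -(@ge0_integral_bigsetU _ _ _ leb _ F _ s mF uniq_s trivF); last 2 first.
- apply/measurable_realfun.measurable_EFinP.
  exact: measurable_funS measurable_energy_density.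
- by move=> x _; rewrite lee_fin energy_density_ge0.
apply: ge0_subset_integral => //.
- exact: bigsetU_measurable (fun a _ => mF a).
- by apply/measurable_realfun.measurable_EFinP; exact: measurable_energy_density.
- by move=> x _; rewrite lee_fin energy_density_ge0.
Qed.

End EnergyDensity.

Theorem lemma7 (R : realType) (E delta0 : R) (hE : 0 < E)
  (hd0 : 0 < delta0) (hd1 : delta0 < 1) :
  exists l0 : nat,
    forall v1 v2 g1 g2 : R -> R,
      in_X1 v1 v2 g1 g2 ->
      (energy v1 v2 g1 g2 <= E%:E)%E ->
      (forall x : R, `|1 - cmod v1 v2 x| < delta0) \/
      (exists (l : nat) (xs : 'I_l -> R),
         (l <= l0)%N /\
         (forall i : 'I_l, delta0 <= `|1 - cmod v1 v2 (xs i)|) /\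
         (forall x : R, (forall i : 'I_l, 1 < `|x - xs i|) ->
            `|1 - cmod v1 v2 x| <= delta0)).
Proof.
pose c := delta0 ^+ 2 / 128; have c_gt0 : 0 < c by rewrite divr_gt0 ?exprn_gt0.
have Ec_ge0 : 0 <= E / c by rewrite divr_ge0 ?ltW.
exists (Num.Def.archi_bound (E / c)) => v1 v2 g1 g2 v_X1 energy_le; right.
pose far (a b : R) := 1 < `|a - b|.
pose bad a := delta0 <= `|1 - cmod v1 v2 a|.
have size_le s : pairwise far s -> all bad s -> (size s <= Num.Def.archi_bound (E / c))%N.
  move=> sep_s bad_s; rewrite (energy_eq_integral_density v_X1) in energy_le.
  have := le_trans (separated_energy_lb v_X1 hd0 sep_s bad_s) energy_le.
  rewrite lee_fin -ler_pdivlMr // => /le_lt_trans /(_ (archi_boundP Ec_ge0)).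
  by rewrite ltr_nat => /ltnW.
have [s [sep_s bad_s maximal_s]] := exists_maximal_pairwise size_le.
exists (size s), (fun i => nth 0 s i); split; [exact: size_le | split].
  by move=> i; apply: (allP bad_s); rewrite mem_nth.
move=> x far_x; rewrite leNgt; apply/negP => /ltW /maximal_s /negP; apply.
by apply/(all_nthP 0) => i lt_i; exact: far_x (Ordinal lt_i).
Qed.
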